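(* Let $p$ be an odd prime and let $A$ be a $p\times p$ symmetric circulant matrix with entries in $\mathbb{Z}_p$. Then the nullity of $A$ over $\mathbb{Z}_p$ (i.e. $p-\operatorname{rank}_{\mathbb{Z}_p}A$) is not equal to $1$.
   Context: A $k\times k$ matrix $(a_{ij})$ is circulant if $a_{ij}=a_{i+1,j+1}$ for all $i,j$ (indices mod $k$). *)

From mathcomp Require Import all_boot all_order all_algebra.
Set Implicit Arguments. Unset Strict Implicit. Unset Printing Implicit Defensive.
Local Open Scope ring_scope.

Definition ord_succ (n : nat) (i : 'I_n) : 'I_n :=
  Ordinal (ltn_pmod i.+1 (leq_ltn_trans (leq0n i) (ltn_ord i))).

Definition circulant (R : Type) (n : nat) (A : 'M[R]_n) : Prop :=
  forall i j : 'I_n, A i j = A (ord_succ i) (ord_succ j).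

Definition symmetric_mx (R : Type) (n : nat) (A : 'M[R]_n) : Prop :=
  A^T = A.

From mathcomp Require Import all_boot all_order all_algebra fingroup perm finfield.

Set Implicit Arguments.
Unset Strict Implicit.
Unset Printing Implicit Defensive.

Import GRing.Theory.
Local Open Scope ring_scope.

(* Index the rows and columns by Z/p, so that a circulant matrix is
   [A = \sum_k a_k *: P_k] with [P_k] the shift by [k] and [a = A 0].
   The shifts commute and [P_k ^+ p = 1], so in characteristic p the
   Frobenius map gives [A ^+ p = (\sum_k a_k)%:M]: if the row sum is nonzero
   then A is invertible.  If the row sum vanishes, the all-ones row [e] is in
   the left kernel of A, and so is the ramp [v = (0, 1, ..., p - 1)], because
   [v *m P_k = v - k *: e] and symmetry ([a_k = a_(-k)]) with p odd forces
   [\sum_k k * a_k = 0].  As [e] and [v] are independent, the nullity is at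
   least 2. *)

Lemma pFrobenius_sum_comm (R : nzRingType) p (I : Type) (r : seq I) (F : I -> R) :
  p \in [pchar R] -> (forall i j, GRing.comm (F i) (F j)) ->
  (\sum_(i <- r) F i) ^+ p = \sum_(i <- r) F i ^+ p.
Proof.
move=> pcharR commF; rewrite -!(pFrobenius_autE pcharR).
elim: r => [|i r IHr]; first by rewrite !big_nil pFrobenius_aut0.
rewrite !big_cons pFrobenius_autD_comm ?IHr //.
by apply: commr_sum => j _; apply: commF.
Qed.

Lemma mxrank_gt1 (F : fieldType) m n (M : 'M[F]_(m, n)) (u w : 'rV[F]_n) :
  u != 0 -> ~~ (w <= u)%MS -> (u <= M)%MS -> (w <= M)%MS -> (1 < \rank M)%N.
Proof.
move=> u_neq0 w_notin_u uM wM; rewrite ltnNge; apply: contra w_notin_u => rM.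
have ru : \rank u = 1%N.
  by apply/eqP; rewrite eqn_leq rank_leq_row lt0n mxrank_eq0.
have Mu : (M <= u)%MS.
  by rewrite -(mxrank_leqif_sup uM).2 eqn_leq (mxrank_leqif_sup uM).1 ru.
exact: submx_trans wM Mu.
Qed.

Section CyclicIndices.

Variable n : nat.
Local Notation N := n.+1.

Lemma ord_succE (i : 'I_N) : ord_succ i = i + Zp1.
Proof. by apply: val_inj; rewrite /= modnDmr addn1. Qed.

Lemma inZpS m : inZp m.+1 = inZp m + Zp1 :> 'I_N.
Proof. by apply: val_inj; rewrite /= modnDm addn1. Qed.

Lemma natr_ord_add (R : nzRingType) (i j : 'I_N) :
  N \in [pchar R] -> ((i + j)%R : 'I_N)%:R = i%:R + j%:R :> R.
Proof. by move=> pcharR; rewrite /= GRing.natr_mod_pchar // natrD. Qed.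

Lemma natr_ord_opp (R : nzRingType) (i : 'I_N) :
  N \in [pchar R] -> ((- i)%R : 'I_N)%:R = - i%:R :> R.
Proof.
by move=> pcharR; apply/eqP; rewrite -addr_eq0 -natr_ord_add // addNr.
Qed.

Lemma circulant_shift (T : Type) (A : 'M[T]_N) :
  circulant A -> forall i j k, A (i + k) (j + k) = A i j.
Proof.
move=> circA i j k.
suff shift m : A (i + inZp m) (j + inZp m) = A i j by rewrite -(shift k) valZpK.
elim: m => [|m IHm]; last by rewrite inZpS !addrA -!ord_succE -circA.
have -> : inZp 0 = 0 :> 'I_N by apply: val_inj; rewrite /= mod0n.
by rewrite !addr0.
Qed.

Lemma circulantE (T : Type) (A : 'M[T]_N) :
  circulant A -> forall i j, A i j = A 0 (j - i).
Proof. by move=> circA i j; rewrite -(circulant_shift circA i j (- i)) subrr. Qed.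

End CyclicIndices.

Section CirculantShifts.

Variables (R : comNzRingType) (n : nat).
Local Notation N := n.+1.

Definition circ_shift (k : 'I_N) : 'M[R]_N := perm_mx (perm (addrI k)).

Lemma circ_shiftE k i j : circ_shift k i j = (k + i == j)%:R.
Proof. by rewrite !mxE permE. Qed.

Lemma circ_shift0 : circ_shift 0 = 1.
Proof. by apply/matrixP => i j; rewrite circ_shiftE add0r mxE. Qed.

Lemma circ_shiftD k l : circ_shift (k + l) = circ_shift k * circ_shift l.
Proof.
rewrite -mulmxE -perm_mxM; congr perm_mx.
by apply/permP => i; rewrite permM !permE /= addrCA addrA.
Qed.

Lemma circ_shiftC k l : GRing.comm (circ_shift k) (circ_shift l).
Proof. by rewrite /GRing.comm -!circ_shiftD addrC. Qed.

Lemma circ_shiftX k m : circ_shift k ^+ m = circ_shift (k *+ m).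
Proof.
elim: m => [|m IHm]; first by rewrite expr0 mulr0n circ_shift0.
by rewrite exprS mulrS circ_shiftD IHm.
Qed.

Lemma circ_shift_order k : circ_shift k ^+ N = 1.
Proof.
rewrite circ_shiftX.
have -> : k *+ N = 0 by apply: val_inj; rewrite Zp_mulrn /= modnMl.
exact: circ_shift0.
Qed.

Lemma mulmx_circ_shift m (u : 'M[R]_(m, N)) k i j :
  (u *m circ_shift k) i j = u i (j - k).
Proof.
rewrite /circ_shift -[perm _]invgK -col_permE mxE; congr (u i _).
by apply: (@perm_inj _ (perm (addrI k))); rewrite permKV permE /= addrC subrK.
Qed.

Lemma circulant_sum_shift (A : 'M[R]_N) :
  circulant A -> A = \sum_k A 0 k *: circ_shift k.
Proof.
move=> circA; apply/matrixP => i j; rewrite summxE (circulantE circA).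
rewrite (bigD1 (j - i)) //= big1 => [|k neq_k]; rewrite mxE circ_shiftE.
  by rewrite subrK eqxx mulr1 addr0.
by rewrite eq_sym -subr_eq eq_sym (negbTE neq_k) mulr0.
Qed.

Lemma mulmx_circulant m (u : 'M[R]_(m, N)) (A : 'M[R]_N) :
  circulant A -> u *m A = \sum_k A 0 k *: (u *m circ_shift k).
Proof.
move=> circA; rewrite {1}(circulant_sum_shift circA) mulmx_sumr.
by apply: eq_bigr => k _; rewrite scalemxAr.
Qed.

Lemma const_mx_mul_circ_shift m (a : R) k :
  const_mx a *m circ_shift k = const_mx a :> 'M_(m, N).
Proof. by apply/matrixP => i j; rewrite mulmx_circ_shift !mxE. Qed.

Definition ramp_row : 'rV[R]_N := \row_(j < N) (j : nat)%:R.

Lemma ramp_row_mul_circ_shift k : N \in [pchar R] ->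
  ramp_row *m circ_shift k = ramp_row - (k : nat)%:R *: const_mx 1.
Proof.
move=> pcharR; apply/matrixP => i j.
by rewrite mulmx_circ_shift !mxE natr_ord_add // natr_ord_opp // mulr1.
Qed.

End CirculantShifts.

Section CirculantFp.

Variable n : nat.
Local Notation N := n.+1.
Hypothesis prime_N : prime N.

Lemma circulant_expp (A : 'M['F_N]_N) :
  circulant A -> A ^+ N = (\sum_k A 0 k)%:M.
Proof.
move=> circA.
have pcharM : N \in [pchar 'M['F_N]_N] by rewrite pchar_lalg pchar_Fp.
rewrite {1}(circulant_sum_shift circA) pFrobenius_sum_comm //; last first.
  move=> k l; rewrite /GRing.comm -!scalerAl -!scalerAr !scalerA.
  by rewrite circ_shiftC mulrC.
rewrite -scalemx1 scaler_suml; apply: eq_bigr => k _.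
have := expf_card (A 0 k); rewrite card_Fp // => expAK.
by rewrite exprZn expAK circ_shift_order.
Qed.

Lemma circulant_mxrank_full (A : 'M['F_N]_N) :
  circulant A -> \sum_k A 0 k != 0 -> \rank A = N.
Proof.
move=> circA s_neq0; apply: mxrank_unit.
have : A ^+ N \in unitmx.
  by rewrite circulant_expp // -scalemx1 unitmxZ ?unitfE // unitmx1.
by rewrite unitrX_pos.
Qed.

End CirculantFp.

Section SymmetricCirculantKernel.

Variables (F : fieldType) (n : nat).
Local Notation N := n.+1.
Hypotheses (pcharF : N \in [pchar F]) (odd_N : odd N).

Lemma symmetric_circulant_entryN (A : 'M[F]_N) :
  symmetric_mx A -> circulant A -> forall k, A 0 (- k) = A 0 k.
Proof. by move=> symA circA k; rewrite -sub0r -(circulantE circA) -{1}symA mxE. Qed.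

Lemma symmetric_circulant_moment (A : 'M[F]_N) :
  symmetric_mx A -> circulant A -> \sum_(k < N) (k : nat)%:R * A 0 k = 0.
Proof.
move=> symA circA; set T := \sum_k _.
have TN : T = - T.
  rewrite {1}/T (reindex_inj oppr_inj) /= -sumrN; apply: eq_bigr => k _.
  by rewrite natr_ord_opp // (symmetric_circulant_entryN symA circA) mulNr.
have two_neq0 : 2%:R != 0 :> F.
  rewrite -(dvdn_pcharf pcharF); apply: contraL odd_N.
  move=> /(dvdn_leq (isT : (0 < 2)%N)) le_N2.
  by rewrite (@anti_leq N 2%N) // le_N2 prime_gt1 // (pcharf_prime pcharF).
have : T *+ 2 = 0 by rewrite mulr2n {1}TN addNr.
by rewrite -mulr_natr => /eqP; rewrite mulf_eq0 (negbTE two_neq0) orbF => /eqP.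
Qed.

Lemma ramp_row_notin_const : ~~ (ramp_row F n <= (const_mx 1 : 'rV_N))%MS.
Proof.
have lt1N : (1 < N)%N by exact: prime_gt1 (pcharf_prime pcharF).
apply/sub_rVP => -[a ramp_eq].
have := congr1 (fun u : 'rV_N => u 0 0) ramp_eq.
have := congr1 (fun u : 'rV_N => u 0 (inZp 1)) ramp_eq.
by rewrite !mxE /= modn_small // mulr1 => <- /eqP; rewrite eq_sym oner_eq0.
Qed.

Lemma symmetric_circulant_nullity (A : 'M[F]_N) :
  symmetric_mx A -> circulant A -> \sum_k A 0 k = 0 -> (2 <= N - \rank A)%N.
Proof.
move=> symA circA s0; rewrite -mxrank_ker.
apply: (mxrank_gt1 _ ramp_row_notin_const).
- by apply/eqP => /matrixP/(_ 0 0); rewrite !mxE; apply/eqP; rewrite oner_eq0.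
- apply/sub_kermxP; rewrite (mulmx_circulant _ circA).
  under eq_bigr do rewrite const_mx_mul_circ_shift.
  by rewrite -scaler_suml s0 scale0r.
apply/sub_kermxP; rewrite (mulmx_circulant _ circA).
under eq_bigr do rewrite ramp_row_mul_circ_shift // scalerBr scalerA.
rewrite sumrB -!scaler_suml s0 scale0r sub0r.
under eq_bigr do rewrite mulrC.
by rewrite symmetric_circulant_moment // scale0r oppr0.
Qed.

End SymmetricCirculantKernel.

Theorem lemma2p7 (p : nat) (hp : prime p) (hodd : odd p) (A : 'M['F_p]_p) :
  symmetric_mx A -> circulant A -> (p - \rank A)%N <> 1%N.
Proof.
case: p hp hodd A => [//|n] hp hodd A symA circA.
have [s0|s_neq0] := eqVneq (\sum_k A 0 k) 0.
  have := symmetric_circulant_nullity (pchar_Fp hp) hodd symA circA s0.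
  by move=> /[swap] ->.
by rewrite circulant_mxrank_full // subnn.
Qed.
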